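(* Let $\epsilon>0$. Assume there exists a quantum algorithm $\mathcal{A}$ that takes a classical witness $w\in\{0,1\}^q$, makes $k$ queries to the graph oracle, and satisfies: for every $S\subseteq V$ with $|S|=\zeta$ there exists $w_S\in\{0,1\}^q$ with $\mathbb{E}_{G\leftarrow B_S}\Pr[\mathcal{A}^G(w_S)\text{ accepts}]\ge1-\epsilon$, and for every $\mathsf{NO}$ distribution $B_{\mathsf{NO}}$ and every $w\in\{0,1\}^q$, $\mathbb{E}_{G\leftarrow B_{\mathsf{NO}}}\Pr[\mathcal{A}^G(w)\text{ accepts}]\le\epsilon$. Then for every $\mu>0$ there exist a $(\mu,\zeta,2q/(\mu\log\ell))$-sunflower $\Sigma$ and a $k$-query quantum algorithm $\mathcal{A}'$ (taking no witness) such that $\mathbb{E}_{G\leftarrow B_S}\Pr[\mathcal{A}'^G\text{ accepts}]\ge1-\epsilon$ for every $S\in\Sigma$, and $\mathbb{E}_{G\leftarrow B_{\mathsf{NO}}}\Pr[\mathcal{A}'^G\text{ accepts}]\le\epsilon$ for every $\mathsf{NO}$ distribution $B_{\mathsf{NO}}$.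
   Context: $N=2^n$ (sufficiently large), $|V|=N$; $d=100$, $\ell=N^{1/10}$, $\gamma=N^{-1/10}$, $M=(1+\gamma)N$, $z=N^{9/10}$, $\zeta=(1+\gamma)z$, $\alpha=1/(2\cdot10^8)$; $\log$ is base $2$. Graphs are $d$-colored $d$-regular on $V$, accessed via $|j,\kappa,z\rangle\mapsto|j,\kappa,z\oplus G(j,\kappa)\rangle$ where $G(j,\kappa)$ is the $\kappa$-neighbor of $j$. A $\mathsf{NO}$ distribution is a distribution supported on $\alpha$-expanding graphs (second largest eigenvalue of the normalized adjacency matrix at most $1-\alpha$). Distribution $P_{M,\ell}$: take $V'$ of size $M$ partitioned into $\ell$ equal parts $V_1,\dots,V_\ell$; on each part take the union of $d$ independent uniformly random perfect matchings, the $\kappa$-th colored $\kappa$, giving $G'$; choose $k:V\to[\ell]$ uniformly at random and an injection $\iota:V\to V'$ with $\iota(j)$ uniformly random in $V_{k(j)}$ without replacement (outputting the edgeless graph if some part is exhausted); let $G$ contain $(j_1,j_2,\kappa)$ iff $(\iota(j_1),\iota(j_2),\kappa)\in G'$, and add a self-loop $(j,j,\kappa)$ wherever $j$ lacks a $\kappa$-colored edge. For $S\subseteq V$, $B_S$ is $P_{M,\ell}$ conditioned on $G$ having a connected component contained in $S$. A collection $\Sigma$ of $\zeta$-element subsets of $V$ is a $(\mu,\zeta,t)$-sunflower if there is $F\subseteq V$ with $|F|\le t$ (the core) such that every $S\in\Sigma$ contains $F$, and every $x\in(\bigcup_{S\in\Sigma}S)\setminus F$ satisfies $\Pr_{S\in\Sigma}[x\in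 S]\le(\zeta/N)^{1-\mu}$ ($S$ uniform in $\Sigma$). *)

From mathcomp Require Import all_boot all_order all_fingroup all_algebra.
From mathcomp Require Import complex.
From mathcomp Require Import Rstruct.
From Stdlib Require Rpower.

Set Implicit Arguments.
Unset Strict Implicit.
Unset Printing Implicit Defensive.
Import Order.TTheory GRing.Theory Num.Theory.
Local Open Scope ring_scope.

Notation RR := Rdefinitions.R.
Definition CC := (Rdefinitions.R)[i].

Definition log2 (x : RR) : RR := Rpower.ln x / Rpower.ln 2%:R.

(* ---------- parameters (N = 2^n with n = 10 m, so that l = N^(1/10) = 2^m) ---------- *)
Definition dd : nat := 100.
Definition nn (m : nat) : nat := 10 * m.
Definition ell (m : nat) : nat := 2 ^ m.
Definition zeta (m : nat) : nat := 2 ^ (9 * m) + 2 ^ (8 * m). (* (1+gamma) z *)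
Definition MM (m : nat) : nat := 2 ^ (10 * m) + 2 ^ (9 * m).  (* (1+gamma) N *)
Definition alpha : RR := (2 * 10 ^ 8)%:R^-1.

Definition vertex (n : nat) := {ffun 'I_n -> bool}.
Definition vxor n (a b : vertex n) : vertex n := [ffun i => a i (+) b i].
(* G(j,kappa) = kappa-neighbour of j *)
Definition graph (n : nat) := {ffun (vertex n * 'I_dd) -> vertex n}.

(* d-colored d-regular: each color class is a matching (possibly with self-loops) *)
Definition colored_regular n (G : graph n) : Prop :=
  forall kap : 'I_dd, involutive (fun j => G (j, kap)).

Definition norm_adj n (G : graph n) : 'M[RR]_(#|vertex n|) :=
  \matrix_(i, j) ((#|[set kap : 'I_dd | G (enum_val i, kap) == enum_val j]|)%:R / dd%:R).

(* second largest eigenvalue (with multiplicity) of the normalized adjacency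
   matrix is at most 1 - a: the list of eigenvalues (roots of the characteristic
   polynomial, with multiplicity) has at most one entry exceeding 1 - a. *)
Definition expanding (a : RR) n (G : graph n) : Prop :=
  exists s : seq RR,
    char_poly (norm_adj G) = \prod_(x <- s) ('X - x%:P) /\
    (count (fun x : RR => (1 - a < x)%R) s <= 1)%N.

Definition gadj n (G : graph n) : rel (vertex n) :=
  fun x y => [exists kap : 'I_dd, (G (x, kap) == y) || (G (y, kap) == x)].

Definition has_comp_in n (G : graph n) (S : {set vertex n}) : bool :=
  [exists j, [set j' | connect (gadj G) j j'] \subset S].

Definition Exp n (p : {ffun graph n -> RR}) (f : graph n -> RR) : RR :=
  \sum_G p G * f G.

Definition is_distr n (p : {ffun graph n -> RR}) : Prop :=
  (forall G, 0 <= p G) /\ \sum_G p G = 1.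

Definition NO_distr n (p : {ffun graph n -> RR}) : Prop :=
  is_distr p /\ forall G, p G != 0 -> colored_regular G /\ expanding alpha G.

(* The distribution P_{M,l}.  V' = 'I_M, part of x is x %/ zeta (M = l * zeta). *)
Definition part m (x : 'I_(MM m)) : nat := x %/ zeta m.

(* a perfect matching on every part, encoded as a fixed-point-free involution
   preserving the parts; uniform over such = independent uniform perfect
   matchings on each part *)
Definition vperm m := {perm 'I_(MM m)}.
Definition vcol m := {ffun 'I_dd -> vperm m}.
Definition vinj m := {ffun vertex (nn m) -> 'I_(MM m)}.
Definition vset n := {set vertex n}.
Definition part_matchings m : {set vperm m} :=
  [set s : vperm m |
     [forall x, (s x != x) && (s (s x) == x) && (part (s x) == part x)]].

Definition colorings m : {set vcol m} :=
  [set sg : vcol m | [forall kap, sg kap \in part_matchings m]].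

Definition fits m (k : {ffun vertex (nn m) -> 'I_(ell m)}) : bool :=
  [forall i : 'I_(ell m), (#|[set j | k j == i]| <= zeta m)%N].

Definition injs m (k : {ffun vertex (nn m) -> 'I_(ell m)}) :
    {set vinj m} :=
  [set io : vinj m | injectiveb io && [forall j, part (io j) == val (k j)]].

(* the graph G induced by G' (given by sg) and iota, with self-loops added *)
Definition induced_graph m (sg : {ffun 'I_dd -> {perm 'I_(MM m)}})
    (io : {ffun vertex (nn m) -> 'I_(MM m)}) : graph (nn m) :=
  [ffun jk : vertex (nn m) * 'I_dd =>
     match [pick j2 | io j2 == sg jk.2 (io jk.1)] with
     | Some j2 => j2 | None => jk.1 end].

Definition edgeless_graph n : graph n := [ffun jk : vertex n * 'I_dd => jk.1].

Definition ExpP m (f : graph (nn m) -> RR) : RR :=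
  (#|colorings m|%:R)^-1 * \sum_(sg in colorings m)
    ((ell m ^ 2 ^ nn m)%:R)^-1 * \sum_(k : {ffun vertex (nn m) -> 'I_(ell m)})
      (if fits k then
         (#|injs k|%:R)^-1 * \sum_(io in injs k) f (induced_graph sg io)
       else f (edgeless_graph (nn m))).

Definition ExpB m (S : {set vertex (nn m)}) (f : graph (nn m) -> RR) : RR :=
  ExpP (fun G => f G * (has_comp_in G S)%:R) / ExpP (fun G => (has_comp_in G S)%:R).

(* registers |j, kappa, z> plus a workspace of dimension a+1 *)
Definition qreg (n a : nat) := (vertex n * 'I_dd * vertex n * 'I_a.+1)%type.
Definition qop (T : finType) := T -> T -> CC.
Definition qstate (T : finType) := T -> CC.

Definition unitary (T : finType) (U : qop T) : Prop :=
  (forall x x', \sum_y U x y * (U x' y)^* = (x == x')%:R) /\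
  (forall x x', \sum_y (U y x)^* * U y x' = (x == x')%:R).

Definition apply_op (T : finType) (U : qop T) (psi : qstate T) : qstate T :=
  fun x => \sum_y U x y * psi y.

Definition basis_state (T : finType) (x0 : T) : qstate T :=
  fun x => (x == x0)%:R.

Definition oracle n a (G : graph n) (psi : qstate (qreg n a)) : qstate (qreg n a) :=
  fun x => let: (j, kap, z, w) := x in psi (j, kap, vxor z (G (j, kap)), w).

(* k-query algorithm: U_k O U_{k-1} ... O U_0 applied to a basis state, then
   measurement of the accepting basis states *)
Record qalg (n k a : nat) := QAlg {
  qa_U : 'I_k.+1 -> qop (qreg n a);
  qa_start : qreg n a;
  qa_acc : {set qreg n a} }.

Definition valid_qalg n k a (A : qalg n k a) : Prop := forall i, unitary (qa_U A i).

Fixpoint run n k a (A : qalg n k a) (G : graph n) (i : nat) : qstate (qreg n a) :=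
  match i with
  | 0 => apply_op (qa_U A ord0) (basis_state (qa_start A))
  | i'.+1 => apply_op (qa_U A (inord i)) (oracle G (run A G i'))
  end.

Definition normsq (c : CC) : RR := complex.Re c ^+ 2 + complex.Im c ^+ 2.

Definition acc_prob n k a (A : qalg n k a) (G : graph n) : RR :=
  \sum_(x in qa_acc A) normsq (run A G k x).

Definition sunflower n (mu : RR) (z : nat) (t : RR) (Sig : {set vset n}) : Prop :=
  Sig != set0 /\ (forall S, S \in Sig -> #|S| = z) /\
  exists F : {set vertex n},
    #|F|%:R <= t /\ (forall S, S \in Sig -> F \subset S) /\
    forall x, x \in \bigcup_(S in Sig) S -> x \notin F ->
      #|[set S in Sig | x \in S]|%:R / #|Sig|%:R
        <= Rpower.Rpower (z%:R / (2 ^ n)%:R) (1 - mu).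

(* Some witness [w] is good for at least a [2 ^ -q] fraction of all
   [zeta]-sets; hardwiring it into [A] gives [A'] together with a dense family
   [Sig0] of good sets.  In [Sig0] take a largest [F] whose supersets still form
   a [p ^ #|F|] fraction, with [p = (zeta / N) ^ (1 - mu)]: by maximality no
   point outside [F] lies in more than a [p] fraction of them, so they form a
   sunflower with core [F].  At most [C(N - f, zeta - f) <= (zeta / N) ^ f C(N, zeta)]
   sets contain [F], whence [(N / zeta) ^ (mu f) <= 2 ^ q], that is
   [f <= q / (mu log (N / zeta)) <= 2 q / (mu log l)]. *)

From mathcomp Require Import all_boot all_order all_fingroup all_algebra.
From mathcomp Require Import complex Rstruct.
From mathcomp Require Import zify lra.
From Stdlib Require Import Rpower Exp_prop.

Set Implicit Arguments.
Unset Strict Implicit.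
Unset Printing Implicit Defensive.
Import Order.TTheory GRing.Theory Num.Theory.

Lemma exists_witness_dense (W T : finType) (w0 : W) (D : {set T})
    (P : W -> pred T) :
  (forall x, x \in D -> exists w, P w x) ->
  exists w, (#|D| <= #|W| * #|[set x in D | P w x]|)%N.
Proof.
move=> covered.
have [wm _ wm_max] :=
  @arg_maxnP W w0 xpredT (fun w => #|[set x in D | P w x]|) isT.
exists wm.
have card_sum w : #|[set x in D | P w x]| = (\sum_(x in D) P w x)%N.
  rewrite -sum1_card [RHS](eq_bigr (fun x => if P w x then 1 else 0)%N);
    last by move=> x _; case: (P w x).
  by rewrite -big_mkcondr; apply: eq_bigl => x; rewrite inE.
apply: (@leq_trans (\sum_(x in D) \sum_(w : W) P w x)).
  rewrite -sum1_card; apply: leq_sum => x /covered[w Pwx].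
  by rewrite (bigD1 w) //= Pwx leq_addr.
rewrite exchange_big /= -sum_nat_const; apply: leq_sum => w _.
by rewrite -card_sum; apply: wm_max.
Qed.

Lemma leq_mul_bin_sub (N z f : nat) : (f <= z)%N -> (z <= N)%N ->
  ('C(N - f, z - f) * N ^ f <= 'C(N, z) * z ^ f)%N.
Proof.
move=> + zN; elim: f => [|f IHf] fz; first by rewrite !subn0 !expn0.
have {IHf}IHf := IHf (ltnW fz).
set b := 'C(N - f, z - f) in IHf *; set b' := 'C(N - f.+1, z - f.+1).
have pascal : ((N - f) * b' = (z - f) * b)%N.
  have := mul_bin_diag (N - f) (z - f.+1).
  have -> : (z - f.+1).+1 = z - f by lia.
  by have -> : (N - f).-1 = N - f.+1 by lia.
have step : (b' * N <= b * z)%N.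
  rewrite -(@leq_pmul2l (N - f)); last by lia.
  rewrite mulnA pascal -mulnA mulnCA [X in (_ <= X)%N]mulnCA leq_mul2l.
  have : ((z - f) * N <= (N - f) * z)%N by nia.
  by move=> ->; rewrite orbT.
rewrite !expnS mulnA (leq_trans (leq_mul step (leqnn _))) //.
by rewrite -mulnA mulnCA [X in (_ <= X)%N]mulnCA leq_mul2l IHf orbT.
Qed.

Lemma card_supsets_leq (T : finType) (F : {set T}) (z : nat) :
  (#|[set S : {set T} | F \subset S & #|S| == z]| <= 'C(#|T| - #|F|, z - #|F|))%N.
Proof.
set D := [set S : {set T} | _ & _].
have inj : {in D &, injective (fun S => S :\: F)}.
  move=> S1 S2; rewrite !inE => /andP[FS1 _] /andP[FS2 _] eqD.
  by rewrite -(setID S1 F) -(setID S2 F) eqD (setIidPr FS1) (setIidPr FS2).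
rewrite -(cardsC F) addKn -(card_in_imset inj) -cards_draws subset_leq_card //.
apply/subsetP => _ /imsetP[S + ->]; rewrite !inE => /andP[FS /eqP cardS].
by rewrite cardsD (setIidPr FS) cardS eqxx andbT setDE subsetIr.
Qed.

Local Open Scope ring_scope.

Definition supsets_in (T : finType) (Sig : {set {set T}}) (F : {set T}) :=
  [set S in Sig | F \subset S].

Lemma supsets_inU1 (T : finType) (Sig : {set {set T}}) (F : {set T}) x :
  supsets_in Sig (x |: F) = [set S in supsets_in Sig F | x \in S].
Proof.
apply/setP => S; rewrite !inE subUset sub1set.
by case: (S \in Sig); case: (x \in S); case: (F \subset S).
Qed.

Lemma exists_sunflower_core (R : realDomainType) (T : finType)
    (Sig : {set {set T}}) (p : R) :
  0 < p -> Sig != set0 ->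
  exists F : {set T}, [/\ supsets_in Sig F != set0,
    #|Sig|%:R * p ^+ #|F| <= #|supsets_in Sig F|%:R &
    forall x, x \notin F ->
      #|[set S in supsets_in Sig F | x \in S]|%:R
        <= p * #|supsets_in Sig F|%:R].
Proof.
move=> p_gt0 Sig_neq0.
pose dense (F : {set T}) := #|Sig|%:R * p ^+ #|F| <= #|supsets_in Sig F|%:R.
have dense0 : dense set0.
  rewrite /dense cards0 expr0 mulr1 ler_nat subset_leq_card //.
  by apply/subsetP => S SigS; rewrite inE SigS sub0set.
have [F denseF F_max] := @arg_maxnP _ set0 dense (fun F => #|F|) dense0.
have SigF_gt0 : 0 < #|supsets_in Sig F|%:R :> R.
  by apply: lt_le_trans denseF; rewrite mulr_gt0 ?exprn_gt0 // ltr0n card_gt0.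
exists F; split => // [|x xF]; first by rewrite -card_gt0 -(ltr0n R).
rewrite leNgt; apply/negP => x_freq.
have /F_max : dense (x |: F).
  rewrite /dense supsets_inU1 cardsU1 xF add1n exprS mulrCA.
  apply/ltW/(le_lt_trans _ x_freq).
  by rewrite ler_pM2l.
by rewrite /geq /= cardsU1 xF ltnn.
Qed.

Lemma ler_ln (x y : RR) : 0 < x -> x <= y -> ln x <= ln y.
Proof.
move=> x_gt0; rewrite le_eqVlt => /predU1P[-> //|xy].
by apply/ltW/RltP/ln_increasing; apply/RltP.
Qed.

Lemma lnM (x y : RR) : 0 < x -> 0 < y -> ln (x * y) = ln x + ln y.
Proof. by move=> x_gt0 y_gt0; rewrite ln_mult //; apply/RltP. Qed.

Lemma lnXn (x : RR) k : 0 < x -> ln (x ^+ k) = k%:R * ln x.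
Proof. by move=> x_gt0; rewrite -RpowE ln_pow ?INRE //; apply/RltP. Qed.

Lemma ln2_gt0 : 0 < ln 2%:R.
Proof.
have -> : 0 = ln 1 by rewrite ln_1.
by apply/RltP/ln_increasing; apply/RltP; rewrite ?ltr1n.
Qed.

Lemma log2_ell m : log2 (ell m)%:R = m%:R.
Proof. by rewrite /log2 /ell natrX lnXn ?ltr0n // mulfK // gt_eqF ?ln2_gt0. Qed.

Lemma core_density_leq (N z q f s0 s : nat) (p : RR) :
  0 < p -> ('C(N, z) <= 2 ^ q * s0)%N -> s0%:R * p ^+ f <= s%:R ->
  (s <= 'C(N - f, z - f))%N -> (f <= z)%N -> (z <= N)%N ->
  p ^+ f * N%:R ^+ f <= 2%:R ^+ q * z%:R ^+ f.
Proof.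
move=> p_gt0 dense0 dense s_le fz zN.
have binNz_gt0 : 0 < 'C(N, z)%:R :> RR by rewrite ltr0n bin_gt0.
rewrite -(ler_pM2l binNz_gt0) mulrA.
apply: (@le_trans _ _ (2%:R ^+ q * s%:R * N%:R ^+ f)).
  apply: ler_wpM2r; first by rewrite exprn_ge0.
  apply: (@le_trans _ _ (2%:R ^+ q * (s0%:R * p ^+ f))).
    by rewrite mulrA ler_pM2r ?exprn_gt0 // -natrX -natrM ler_nat.
  by rewrite ler_pM2l ?exprn_gt0.
rewrite -!natrX -!natrM ler_nat mulnAC [X in (_ <= X)%N]mulnCA.
rewrite -mulnA leq_mul2l mulnC (leq_trans _ (leq_mul_bin_sub fz zN)) ?orbT //.
by rewrite leq_mul2r s_le orbT.
Qed.

(* The density hypothesis reads [(N / z) ^ (mu f) <= 2 ^ q], and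
   [N / z >= 2 ^ (m - 1) >= 2 ^ (m / 2)]. *)
Lemma core_size_bound (N z q f m : nat) (mu : RR) :
  0 < mu -> (2 <= m)%N -> (0 < z)%N -> (z * 2 ^ (m - 1) <= N)%N ->
  Rpower (z%:R / N%:R) (1 - mu) ^+ f * N%:R ^+ f <= 2%:R ^+ q * z%:R ^+ f ->
  f%:R <= 2 * q%:R / (mu * m%:R).
Proof.
move=> mu_gt0 m_ge2 z_gt0 zN dense.
have z_gt0R : 0 < z%:R :> RR by rewrite ltr0n.
have N_gt0R : 0 < N%:R :> RR.
  by rewrite ltr0n (leq_trans _ zN) // muln_gt0 z_gt0 expn_gt0.
set p := Rpower _ _ in dense.
have p_gt0 : 0 < p by apply/RltP/exp_pos.
have ln_p : ln p = (1 - mu) * (ln z%:R - ln N%:R).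
  by rewrite ln_Rpower lnM ?invr_gt0 // -RinvE ln_Rinv //; apply/RltP.
have ln_dense : mu * f%:R * (ln N%:R - ln z%:R) <= q%:R * ln 2%:R.
  move/ler_ln: dense; rewrite mulr_gt0 ?exprn_gt0 // => /(_ isT).
  rewrite !lnM ?exprn_gt0 // !lnXn // ln_p; nra.
have ln_ratio : (m%:R - 1) * ln 2%:R <= ln N%:R - ln z%:R.
  have /ler_ln : z%:R * 2%:R ^+ (m - 1) <= N%:R :> RR.
    by rewrite -natrX -natrM ler_nat.
  rewrite mulr_gt0 ?exprn_gt0 ?ltr0n // => /(_ isT).
  by rewrite lnM ?exprn_gt0 // lnXn // natrB ?(leq_trans _ m_ge2) //; lra.
have m_ge2R : 2 <= m%:R :> RR by rewrite ler_nat.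
have ln2 := ln2_gt0.
have : mu * f%:R * m%:R * ln 2%:R <= 2 * q%:R * ln 2%:R.
  have mf_ge0 : 0 <= mu * f%:R := mulr_ge0 (ltW mu_gt0) (ler0n _ f).
  have := ler_wpM2l mf_ge0 ln_ratio.
  have : 0 <= mu * f%:R * ln 2%:R * (m%:R - 2).
    by rewrite !mulr_ge0 ?subr_ge0 // ltW.
  by nra.
rewrite ler_pM2r // => bound.
by rewrite ler_pdivlMr ?mulr_gt0 ?ltr0n ?(leq_trans _ m_ge2) // mulrCA mulrA.
Qed.

Lemma card_vertex n : #|vertex n| = (2 ^ n)%N.
Proof. by rewrite card_ffun card_bool card_ord. Qed.

Lemma sunflower_in_dense_family n m q (mu : RR) z (Sig0 : {set vset n}) :
  0 < mu -> (2 <= m)%N -> (0 < z)%N -> (z * 2 ^ (m - 1) <= 2 ^ n)%N ->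
  (forall S, S \in Sig0 -> #|S| = z) ->
  ('C(2 ^ n, z) <= 2 ^ q * #|Sig0|)%N ->
  exists2 Sig : {set vset n}, Sig \subset Sig0 & sunflower mu z (2 * q%:R / (mu * m%:R)) Sig.
Proof.
move=> mu_gt0 m_ge2 z_gt0 zN Sig0_card dense0.
set N := (2 ^ n)%N in zN dense0.
have zleN : (z <= N)%N by rewrite (leq_trans _ zN) // leq_pmulr ?expn_gt0.
have binNz_gt0 : (0 < 'C(N, z))%N by rewrite bin_gt0.
have Sig0_neq0 : Sig0 != set0.
  rewrite -card_gt0 -(@ltn_pmul2l (2 ^ q)) ?expn_gt0 // muln0.
  exact: leq_trans binNz_gt0 dense0.
pose p := Rpower (z%:R / N%:R) (1 - mu).
have p_gt0 : 0 < p by apply/RltP/exp_pos.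
have [F [SigF_neq0 denseF freqF]] := exists_sunflower_core p_gt0 Sig0_neq0.
set Sig := supsets_in Sig0 F in SigF_neq0 denseF freqF.
have SigP S : S \in Sig -> [/\ S \in Sig0, #|S| = z & F \subset S].
  by rewrite inE => /andP[Sig0S FS]; rewrite Sig0_card.
exists Sig; first by apply/subsetP => S /SigP[].
have Sig_freq x : x \notin F ->
    #|[set S in Sig | x \in S]|%:R / #|Sig|%:R <= p.
  by move=> xF; rewrite ler_pdivrMr ?ltr0n ?card_gt0 //; apply: freqF.
split=> //; split=> [S /SigP[] //|]; exists F.
split; last by split=> [S /SigP[] | x _ /Sig_freq].
have [S0 /SigP[_ S0_card FS0]] := set0Pn _ SigF_neq0.
have fz : (#|F| <= z)%N by rewrite -S0_card subset_leq_card.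
have Sig_card : (#|Sig| <= 'C(N - #|F|, z - #|F|))%N.
  rewrite /N -card_vertex (leq_trans _ (card_supsets_leq F z)) //.
  apply: subset_leq_card; apply/subsetP => S /SigP[_ cardS FS].
  by rewrite inE FS cardS /=.
apply: (core_size_bound mu_gt0 m_ge2 z_gt0 zN).
exact: (core_density_leq p_gt0 dense0 denseF Sig_card fz zleN).
Qed.

Lemma zeta_half_ell_leq m : (1 <= m)%N -> (zeta m * 2 ^ (m - 1) <= 2 ^ nn m)%N.
Proof.
move=> m_ge1; rewrite /zeta /nn mulnDl -!expnD.
have -> : (10 * m = (9 * m + (m - 1)).+1)%N by lia.
by rewrite expnS mul2n -addnn leq_add2l leq_pexp2l //; lia.
Qed.

Theorem lemma18 :
  exists m0 : nat, forall m : nat, (m0 <= m)%N ->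
  forall (eps : RR), 0 < eps ->
  forall (q k a : nat) (A : {ffun 'I_q -> bool} -> qalg (nn m) k a),
    (forall w, valid_qalg (A w)) ->
    (forall S : {set vertex (nn m)}, #|S| = zeta m ->
       exists wS, 1 - eps <= ExpB S (acc_prob (A wS))) ->
    (forall p, NO_distr p -> forall w, Exp p (acc_prob (A w)) <= eps) ->
  forall mu : RR, 0 < mu ->
    exists Sig : {set vset (nn m)},
      sunflower mu (zeta m) (2 * q%:R / (mu * log2 (ell m)%:R)) Sig /\
      exists (a' : nat) (A' : qalg (nn m) k a'),
        valid_qalg A' /\
        (forall S, S \in Sig -> 1 - eps <= ExpB S (acc_prob A')) /\
        (forall p, NO_distr p -> Exp p (acc_prob A') <= eps).
Proof.
exists 2%N => m m_ge2 eps _ q k a A A_valid A_yes A_no mu mu_gt0.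
pose yes w S := 1 - eps <= ExpB S (acc_prob (A w)).
pose D := [set S : vset (nn m) | #|S| == zeta m].
have [w dense] : exists w, (#|D| <= #|{ffun 'I_q -> bool}| * #|[set S in D | yes w S]|)%N.
  by apply: exists_witness_dense [ffun=> false] _ _ _ => S; rewrite inE => /eqP/A_yes.
set Sig0 := [set S in D | yes w S] in dense.
have zeta_gt0 : (0 < zeta m)%N by rewrite addn_gt0 expn_gt0.
have Sig0_card S : S \in Sig0 -> #|S| = zeta m by rewrite !inE => /andP[/eqP].
have Sig0_dense : ('C(2 ^ nn m, zeta m) <= 2 ^ q * #|Sig0|)%N.
  by rewrite -card_vertex -card_draws -(card_ord q) -card_bool -card_ffun.
have [Sig SigD Sig_sunflower] := sunflower_in_dense_family
  mu_gt0 m_ge2 zeta_gt0 (zeta_half_ell_leq (ltnW m_ge2)) Sig0_card Sig0_dense.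
exists Sig; split; first by rewrite log2_ell.
exists a, (A w); split=> //; split=> [S /(subsetP SigD)|p /A_no //].
by rewrite inE => /andP[].
Qed.
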